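(* Let $\Sigma=\{0,1\}$ and $D=\Sigma(\Sigma\Sigma)^*\setminus\left(\Sigma^*11\Sigma^*\cup000\Sigma^*\cup101\Sigma^*\right)$. A map $f:\mathbb{Z}\to D$ is an increasing bijection from $(\mathbb{Z},<)$ to $(D,\prec)$ with $f(0)=0$ (the one-letter word) if and only if $f=\mathrm{rep}_{\mathcal{F}c}$.
   Context: Fibonacci numbers: $F_0=1$, $F_1=2$, $F_n=F_{n-1}+F_{n-2}$ for $n\ge2$. For a nonempty binary word $w=w_{k-1}\cdots w_0$ (digits indexed from the right), $\mathrm{val}_{\mathcal{F}c}(w)=\sum_{i=0}^{k-1}w_iF_i-w_{k-1}F_k$. $\mathrm{rep}_{\mathcal{F}c}(n)$ denotes the unique $w\in D$ with $\mathrm{val}_{\mathcal{F}c}(w)=n$ (this restriction of $\mathrm{val}_{\mathcal{F}c}$ to $D$ is a bijection onto $\mathbb Z$). Order: $u<_{rad}v$ iff $|u|<|v|$, or $|u|=|v|$ and $u<_{lex}v$; $u<_{rev}v$ iff $|u|>|v|$, or $|u|=|v|$ and $u<_{lex}v$. The total order $\prec$ on $\Sigma^*$: $u\prec v$ iff either $u\in1\Sigma^*$ and $v\in0\Sigma^*$; or $u,v\in0\Sigma^*$ and $u<_{rad}v$; or $u,v\in1\Sigma^*$ and $u<_{rev}v$. *)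

From mathcomp Require Import all_boot all_order all_algebra.
Set Implicit Arguments. Unset Strict Implicit. Unset Printing Implicit Defensive.
Import Order.TTheory GRing.Theory Num.Theory.

(* Words over Sigma = {0,1} are [seq bool] (false = 0, true = 1), written
   left to right: the word w_{k-1} ... w_0 is [:: w_{k-1}; ...; w_0]. *)
Definition word := seq bool.

Fixpoint Fib (n : nat) : nat :=
  match n with
  | 0 => 1
  | 1 => 2
  | (m.+1 as p).+1 => Fib p + Fib m
  end.

(* w_i = digit of index i counted from the right. *)
Definition digit (w : word) (i : nat) : bool := nth false (rev w) i.

Definition valFc (w : word) : int :=
  ((\sum_(i < size w) (digit w i : nat) * Fib i)%N)%:Z
  - ((head false w : nat) * Fib (size w))%N%:Z.

Fixpoint has11 (w : word) : bool :=
  match w with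
  | [::] => false
  | a :: t => (a && head false t) || has11 t
  end.

Definition inD (w : word) : bool :=
  [&& odd (size w), ~~ has11 w,
      ~~ prefix [:: false; false; false] w
    & ~~ prefix [:: true; false; true] w].

Fixpoint lexlt (u v : word) : bool :=
  match u, v with
  | [::], [::] => false
  | [::], _ :: _ => true
  | _ :: _, [::] => false
  | a :: u', b :: v' => (~~ a && b) || ((a == b) && lexlt u' v')
  end.

Definition radlt (u v : word) : bool :=
  (size u < size v)%N || ((size u == size v) && lexlt u v).

Definition revlt (u v : word) : bool :=
  (size u > size v)%N || ((size u == size v) && lexlt u v).

Definition starts_with (b : bool) (u : word) : bool :=
  if u is a :: _ then a == b else false.

Definition prec (u v : word) : bool :=
  [|| starts_with true u && starts_with false v,
      [&& starts_with false u, starts_with false v & radlt u v]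
    | [&& starts_with true u, starts_with true v & revlt u v]].

(* f is the map rep_Fc: for every n, f n is the (unique) word of D
   whose val_Fc is n. *)
Definition is_repFc (f : int -> word) : Prop :=
  forall n : int, inD (f n) /\ valFc (f n) = n.

Definition increasing_bij_onto_D (f : int -> word) : Prop :=
  [/\ (forall n, inD (f n)),
      (forall w, inD w -> exists n, f n = w),
      injective f
    & (forall m n : int, (m < n)%R -> prec (f m) (f n))].

From mathcomp Require Import all_boot all_order all_algebra.
From mathcomp Require Import zify.
Set Implicit Arguments. Unset Strict Implicit. Unset Printing Implicit Defensive.
Import Order.TTheory GRing.Theory Num.Theory.

(* On D, \prec is exactly the order induced by val_Fc: words beginning with 1
   have negative value and those beginning with 0 nonnegative value; among
   words with the same first letter, a change of length moves the value into
   the next block of Fibonacci bounds (longer is larger for leading 0 and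
   smaller for leading 1), while for equal lengths val_Fc compares as the
   Zeckendorf value, i.e. lexicographically. Greedy Zeckendorf expansions show
   that val_Fc maps D onto Z, so val_Fc is an order isomorphism from (D, \prec)
   to (Z, <). An increasing bijection f : Z -> D then makes val_Fc \o f an
   increasing bijection of Z; fixing 0 it is the identity, i.e. f = rep_Fc. *)

Lemma Fib0 : Fib 0 = 1. Proof. by []. Qed.
Lemma Fib1 : Fib 1 = 2. Proof. by []. Qed.
Lemma FibSS n : Fib n.+2 = Fib n.+1 + Fib n. Proof. by []. Qed.
Arguments Fib : simpl never.

Lemma leq_Fib_succ n : Fib n <= Fib n.+1.
Proof. by case: n => [|n] //; rewrite FibSS leq_addr. Qed.

Lemma leq_Fib : {homo Fib : m n / m <= n}.
Proof. exact: homo_leq leqnn (fun _ _ _ => @leq_trans _ _ _) leq_Fib_succ. Qed.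

Lemma ltn_Fib n : n < Fib n.
Proof.
elim: n => [|[|n] IH] //; rewrite FibSS.
by have : 0 < Fib n := leq_Fib (leq0n n); lia.
Qed.

Lemma Fib_succ_leq_double n : Fib n.+1 <= Fib n + Fib n.
Proof. by case: n => [|n] //; rewrite FibSS leq_add2l leq_Fib_succ. Qed.

(* Fib n.+1 - Fib n is nondecreasing, stated without truncated subtraction. *)
Lemma Fib_incr_homo m n : m <= n -> Fib m.+1 + Fib n <= Fib n.+1 + Fib m.
Proof.
elim: n => [|n IH]; first by rewrite leqn0 => /eqP->.
rewrite leq_eqVlt => /orP [/eqP-> //| /IH].
by have := Fib_succ_leq_double n; rewrite FibSS; lia.
Qed.

Fixpoint fibval (w : word) : nat :=
  if w is a :: t then a * Fib (size t) + fibval t else 0.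

Lemma sum_digit_Fib w : (\sum_(i < size w) digit w i * Fib i)%N = fibval w.
Proof.
elim: w => [|a t IH]; first by rewrite big_ord0.
rewrite /= big_ord_recr /= -IH addnC /digit rev_cons nth_rcons size_rev ltnn eqxx.
by congr (_ + _); apply: eq_bigr => i _; rewrite nth_rcons size_rev ltn_ord.
Qed.

Lemma valFcE w :
  valFc w = ((fibval w)%:Z - (head false w * Fib (size w))%N%:Z)%R.
Proof. by rewrite /valFc sum_digit_Fib. Qed.

Lemma no11_behead a t : ~~ has11 (a :: t) -> ~~ has11 t.
Proof. by rewrite /= negb_or => /andP[]. Qed.

Lemma fibval_lt_Fib w : ~~ has11 w -> fibval w < Fib (size w).
Proof.
move: (leqnn (size w)); move: {2}(size w) => n.
elim: n w => [|n IH] [|[] t] //= le_n no11.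
- case: t le_n no11 => [|[] t] //= le_n no11.
  by have := IH t (ltnW le_n) no11; rewrite FibSS; lia.
- by have := IH t le_n no11; have := leq_Fib_succ (size t); lia.
Qed.

Lemma fibval_lexlt u v : size u = size v -> ~~ has11 u -> ~~ has11 v ->
  lexlt u v -> fibval u < fibval v.
Proof.
elim: u v => [|a u IH] [|b v] // [Esize] /no11_behead u11 /no11_behead v11 /=.
case/orP => [/andP[] | /andP[/eqP<- /(IH _ Esize u11 v11)]]; last by rewrite Esize; lia.
by case: a b => -[] // _ _; have := fibval_lt_Fib u11; rewrite Esize; lia.
Qed.

Lemma lexlt_total u v : size u = size v -> u != v -> lexlt u v || lexlt v u.
Proof.
elim: u v => [|a u IH] [|b v] // [Esize] /=.
by case: a b => -[] //= neq_uv; apply: IH Esize _; apply: contra neq_uv => /eqP->.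
Qed.

Lemma inD_no11 w : inD w -> ~~ has11 w. Proof. by case/and4P. Qed.

Lemma inD_odd w : inD w -> odd (size w). Proof. by case/and4P. Qed.

Lemma inD_cons0 t : inD (false :: t) ->
  t = [::] \/ exists c d t', [/\ t = c :: d :: t', c || d & ~~ has11 t'].
Proof.
case: t => [|c [|d t]] Dt; [by left | by case/and4P: Dt | right].
case/and4P: Dt => _ /no11_behead/no11_behead/no11_behead no11 not000 _.
exists c, d, t; split => //.
by move: not000 {no11}; case: c d => -[] //; case: t.
Qed.

Lemma inD_cons1 t : inD (true :: t) ->
  t = [::] \/ exists t', t = false :: false :: t' /\ ~~ has11 t'.
Proof.
case: t => [|c [|d t]] Dt; [by left | by case/and4P: Dt | right].
case/and4P: Dt => _; case: c => //; case: d => /= [_ _|t11 _ _]; last by exists t.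
by case: t.
Qed.

Lemma valFc_cons1_lt0 u : ~~ has11 (true :: u) -> (valFc (true :: u) < 0)%R.
Proof. by move=> /fibval_lt_Fib; rewrite valFcE /=; lia. Qed.

Lemma valFc_lexlt u v : size u = size v -> head false u = head false v ->
  ~~ has11 u -> ~~ has11 v -> lexlt u v -> (valFc u < valFc v)%R.
Proof.
move=> Esize Ehead u11 v11 /(fibval_lexlt Esize u11 v11).
by rewrite !valFcE Esize Ehead; lia.
Qed.

Lemma valFc_cons1_size u v : inD (true :: u) -> inD (true :: v) ->
  size v < size u -> (valFc (true :: u) < valFc (true :: v))%R.
Proof.
move=> Du Dv; have := inD_odd Du; have := inD_odd Dv.
case: (inD_cons1 Du) => [-> | [t [-> t11]]] //= v_odd u_odd lt_vu.
have le_vt : size v <= size t by lia.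
have := Fib_incr_homo le_vt; have := fibval_lt_Fib t11; rewrite !valFcE /=.
by have := FibSS (size t).+1; have := FibSS (size t); lia.
Qed.

Lemma valFc_cons0_size u v : inD (false :: u) -> inD (false :: v) ->
  size u < size v -> (valFc (false :: u) < valFc (false :: v))%R.
Proof.
move=> Du Dv; have := inD_odd Du; have := inD_odd Dv.
case: (inD_cons0 Dv) => [-> | [c [d [t [-> cd _]]]]] //= v_odd u_odd lt_uv.
have le_ut : size u <= size t by lia.
have := leq_Fib le_ut; have := leq_Fib_succ (size t).
have := fibval_lt_Fib (no11_behead (inD_no11 Du)); rewrite !valFcE /=.
by move: cd; case: c d => -[] //= _; lia.
Qed.

Lemma valFc_prec u v : inD u -> inD v -> prec u v -> (valFc u < valFc v)%R.
Proof.
case: u => [|a u] Du; first by case/and4P: Du.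
case: v => [|b v] Dv; first by case/and4P: Dv.
have u11 := inD_no11 Du; have v11 := inD_no11 Dv.
rewrite /prec /radlt /revlt /= !ltnS !eqSS.
case: a b Du Dv u11 v11 => -[] Du Dv u11 v11 //=; rewrite ?orbF.
- case/orP => [/(valFc_cons1_size Du Dv) // | /andP[/eqP Esize lex_uv]].
  by apply: (valFc_lexlt _ _ u11 v11); rewrite /= ?Esize ?lex_uv.
- by move=> _; have := valFc_cons1_lt0 u11; rewrite [valFc (false :: v)]valFcE /=; lia.
- case/orP => [/(valFc_cons0_size Du Dv) // | /andP[/eqP Esize lex_uv]].
  by apply: (valFc_lexlt _ _ u11 v11); rewrite /= ?Esize ?lex_uv.
Qed.

Lemma prec_total u v : inD u -> inD v -> u != v -> prec u v || prec v u.
Proof.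
case: u => [|a u] Du; first by case/and4P: Du.
case: v => [|b v] Dv; first by case/and4P: Dv.
move=> neq; rewrite /prec /radlt /revlt.
case: a b neq {Du Dv} => -[] neq /=; rewrite ?orbF //=;
  (have neq' : u != v by apply: contra neq => /eqP->);
  rewrite !ltnS !eqSS; case: (ltngtP (size u) (size v)) => Esize; rewrite ?orbT //=;
  by have := lexlt_total Esize neq'; case: (lexlt u v); case: (lexlt v u); rewrite ?orbT.
Qed.

Lemma prec_valFc u v : inD u -> inD v -> prec u v = (valFc u < valFc v)%R.
Proof.
move=> Du Dv; apply/idP/idP; first exact: valFc_prec.
case: (eqVneq u v) => [-> | neq]; first by rewrite ltxx.
case/orP: (prec_total Du Dv neq) => // /(valFc_prec Dv Du) lt_vu lt_uv.
by have := lt_trans lt_uv lt_vu; rewrite ltxx.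
Qed.

Lemma valFc_inj u v : inD u -> inD v -> valFc u = valFc v -> u = v.
Proof.
move=> Du Dv Eval; apply/eqP/negPn/negP => /(prec_total Du Dv).
by rewrite !prec_valFc // Eval ltxx.
Qed.

Lemma zeckendorf m N : N < Fib m ->
  exists w, [/\ size w = m, ~~ has11 w & fibval w = N].
Proof.
elim/ltn_ind: m N => -[|[|m]] IH N ltN.
- by exists [::]; move: ltN; rewrite Fib0; case: N.
- by exists [:: N == 1]; move: ltN; rewrite Fib1 /= andbF; case: N => [|[]].
- case: (ltnP N (Fib m.+1)) => [ltN1 | leN1].
    have [w [Esize w11 Ew]] := IH m.+1 (ltnSn _) N ltN1.
    by exists (false :: w); rewrite /= Esize.
  have ltN2 : N - Fib m.+1 < Fib m by move: ltN; rewrite FibSS; lia.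
  have [w [Esize w11 Ew]] := IH m (leqnSn _) _ ltN2.
  by exists [:: true, false & w]; rewrite /= Esize w11; split => //; lia.
Qed.

Lemma valFc_onto_nonneg j n : n < Fib j.*2 -> exists2 w, inD w & valFc w = n.
Proof.
elim: j n => [|j IH] n ltnF.
  by exists [:: false] => //; move: ltnF; rewrite valFcE Fib0 /=; lia.
case: (ltnP n (Fib j.*2)) => [|leFn]; first exact: IH.
rewrite doubleS in ltnF; have [u [Esize u11 Eu]] := zeckendorf ltnF.
exists (false :: u); last by rewrite valFcE /= Eu; lia.
rewrite /inD /= Esize /= odd_double u11 /=.
case: u Esize u11 Eu => [|[] [|[] u]] //= [Esize] u11 Eu.
by have := fibval_lt_Fib u11; rewrite Esize; lia.
Qed.

(* For Fib j.*2.+1 < n, the word of value -n is 100 followed by the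
   Zeckendorf expansion of Fib j.*2.+3 - n. *)
Lemma valFc_onto_neg j n : 0 < n <= Fib j.*2.+1 ->
  exists2 w, inD w & valFc w = (- n%:Z)%R.
Proof.
elim: j n => [|j IH] n /andP[n_gt0 leFn].
  move: n_gt0 leFn; rewrite Fib1; case: n => [|[|[|n]]] // _ _.
  - by exists [:: true]; rewrite // valFcE.
  - by exists [:: true; false; false]; rewrite // valFcE.
case: (leqP n (Fib j.*2.+1)) => [leFn1 | ltFn1]; first by apply: IH; rewrite n_gt0.
rewrite doubleS in leFn.
have E1 := FibSS j.*2.+1; have E2 := FibSS j.*2.+2; have E3 := FibSS j.*2.+3.
have ltF : Fib j.*2.+3 - n < Fib j.*2.+2 by lia.
have [u [Esize u11 Eu]] := zeckendorf ltF.
exists [:: true, false, false & u]; first by rewrite /inD /= Esize /= odd_double u11.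
by rewrite valFcE /= Esize Eu; lia.
Qed.

Lemma valFc_onto z : exists2 w, inD w & valFc w = z.
Proof.
case: z => n.
- by apply: (@valFc_onto_nonneg n); have := ltn_Fib n.*2; lia.
- by rewrite NegzE; apply: (@valFc_onto_neg n); have := ltn_Fib n.*2.+1; lia.
Qed.

Lemma incr_onto_int_id (h : int -> int) :
  {homo h : m n / (m < n)%R} -> (forall n, exists m, h m = n) ->
  h 0%R = 0%R -> forall n, h n = n.
Proof.
move=> h_incr h_onto h0.
have h_succ a : h (a + 1)%R = (h a + 1)%R.
  have [m hm] := h_onto (h a + 1)%R.
  have lt_a_succ : (a < a + 1)%R by lia.
  have [lt_ma | [Ema | [<- // | lt_m]]] : (m < a \/ m = a \/ m = a + 1 \/ a + 1 < m)%R.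
  - by lia.
  - by have := h_incr _ _ lt_ma; lia.
  - by move: hm; rewrite Ema; lia.
  - by have := h_incr _ _ lt_m; have := h_incr _ _ lt_a_succ; lia.
have h_pos (k : nat) : h k = k.
  by elim: k => [|k IH] //; rewrite -addn1 PoszD h_succ IH.
have h_neg k : (h (- k%:Z) = - k%:Z)%R.
  elim: k => [|k IH]; first by rewrite oppr0.
  have Ek : (- k.+1%:Z + 1 = - k%:Z)%R by lia.
  by have := h_succ (- k.+1%:Z)%R; rewrite Ek IH; lia.
by case=> k; rewrite ?NegzE.
Qed.

Theorem mainTheorem3 (f : int -> word) :
  (increasing_bij_onto_D f /\ f 0%R = [:: false]) <-> is_repFc f.
Proof.
split.
- case=> -[fD f_onto _ f_incr] f0 n; split; first exact: fD.
  apply: (@incr_onto_int_id (valFc \o f)) => [a b lt_ab | z |] /=.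
  + by rewrite -prec_valFc ?f_incr.
  + have [w Dw <-] := valFc_onto z; have [m <-] := f_onto w Dw.
    by exists m.
  + by rewrite f0 valFcE.
- move=> frep; have fD n := (frep n).1; have fV n := (frep n).2.
  split; first split => //.
  + by move=> w Dw; exists (valFc w); apply: valFc_inj; rewrite ?fV.
  + by move=> a b /(congr1 valFc); rewrite !fV.
  + by move=> a b; rewrite prec_valFc ?fV.
  + by apply: valFc_inj; rewrite ?fV ?valFcE.
Qed.
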